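(* Let $A$ be an integral domain, $a,b\in A\setminus\{0\}$ relatively prime, and $s,t\in A$ relatively prime with $a=st$ (where $u,v$ relatively prime means $uA\cap vA=uvA$). Let $A[X]$ be a polynomial ring in one variable and $I=(aX-b)A[X]$. Then the following are equivalent: (a) $\bigcap_{i\ge0}(s^iA[X]+I)=I$; (b) $A\cap\bigcap_{i\ge0}(s^iA[X]+I)=0$. Moreover, $A\cap\bigcap_{i\ge0}(s^iA[X]+I)=W(b,s,t)$.
   Context: For elements $b,s,t$ of a ring $A$, define ideals $W_i,J_i$ ($i\ge0$) by $W_0=A$, $J_0=(W_0:t)=A$, and for $i\ge1$: $W_i=bJ_{i-1}+s^iA$ and $J_i=(W_i:t)$, where $(W:t)=\{x\in A: tx\in W\}$. Set $W(b,s,t)=\bigcap_{i\ge0}W_i$. *)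

From HB Require Import structures.
From mathcomp Require Import all_boot all_order all_algebra.
Set Implicit Arguments. Unset Strict Implicit. Unset Printing Implicit Defensive.
Import GRing.Theory.
Local Open Scope ring_scope.

Definition rel_prime (A : comRingType) (u v : A) : Prop :=
  forall x : A, ((exists p, x = u * p) /\ (exists q, x = v * q)) <->
                (exists r, x = u * v * r).

(* W_i(b,s,t): W_0 = A, J_i = (W_i : t), W_{i+1} = b J_i + s^{i+1} A *)
Fixpoint Wid (A : comRingType) (b s t : A) (i : nat) : A -> Prop :=
  match i with
  | 0 => fun _ => True
  | k.+1 => fun x => exists y z, Wid b s t k (t * y) /\ x = b * y + s ^+ k.+1 * z
  end.

Definition Jid (A : comRingType) (b s t : A) (i : nat) : A -> Prop :=
  fun x => Wid b s t i (t * x).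

Definition Wbst (A : comRingType) (b s t : A) : A -> Prop :=
  fun x => forall i, Wid b s t i x.

Definition Iid (A : comRingType) (a b : A) : {poly A} -> Prop :=
  fun f => exists h : {poly A}, f = (a%:P * 'X - b%:P) * h.

Definition sIid (A : comRingType) (a b s : A) (i : nat) : {poly A} -> Prop :=
  fun f => exists g h : {poly A}, f = (s ^+ i)%:P * g + (a%:P * 'X - b%:P) * h.

Definition bigsI (A : comRingType) (a b s : A) : {poly A} -> Prop :=
  fun f => forall i, sIid a b s i f.

From HB Require Import structures.
From mathcomp Require Import all_boot all_order all_algebra ring.
Set Implicit Arguments. Unset Strict Implicit. Unset Printing Implicit Defensive.
Import GRing.Theory.
Local Open Scope ring_scope.

(* Modulo I = (aX - b), multiplication by a turns X into b, so a suitable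
   power of a times any f is congruent to a constant c; and since a is coprime
   to b, a and each of its factors are non-zero-divisors modulo I.  If f lies
   in the intersection, so does c, hence (b) gives a^n f in I, and so f in I.
   For the second claim write c = s^(i+1) g + (aX - b) h: evaluating at 0 gives
   c = b y + s^(i+1) z with y = -h(0), and the remaining X-part shows that
   a y = s (t y) lies in s^(i+1) A[X] + I; cancelling s gives exactly the
   recursion t y in s^i A[X] + I defining W_(i+1). *)

Section PolyIdeals.
Variable A : idomainType.

Section RelPrime.
Implicit Types (u v w x y : A) (p q : {poly A}).

Lemma rel_prime_cancel u v x y :
  rel_prime u v -> v != 0 -> v * x = u * y -> exists r, x = u * r.
Proof.
move=> uv v0 E.
have [r Er] := (uv (v * x)).1 (conj (ex_intro _ y E) (ex_intro _ x erefl)).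
by exists r; apply: (mulfI v0); rewrite Er; ring.
Qed.

Lemma rel_prime_factorl u w v : w != 0 -> rel_prime (u * w) v -> rel_prime u v.
Proof.
move=> w0 uwv x; split=> [[[y Ey] [z Ez]] | [r ->]]; last first.
  by split; [exists (v * r) | exists (u * r)]; ring.
have [r Er] : exists r, w * x = u * w * v * r.
  by apply: (uwv _).1; split; [exists y; rewrite Ey | exists (w * z); rewrite Ez]; ring.
by exists r; apply: (mulfI w0); rewrite Er; ring.
Qed.

Lemma polyC_dvd_coefs u p : (forall j, exists r, p`_j = u * r) -> exists q, p = u%:P * q.
Proof.
elim/poly_ind: p => [|p c IH] dvd_p; first by exists 0; rewrite mulr0.
have [q ->] : exists q, p = u%:P * q.
  apply: IH => j; have [r] := dvd_p j.+1.
  by rewrite coefD coefMX coefC /= addr0; exists r.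
have [r] := dvd_p 0%N; rewrite coefD coefMX coefC /= add0r => ->.
by exists (q * 'X + r%:P); ring.
Qed.

Lemma rel_prime_polyC_cancel u v p q :
  rel_prime u v -> v != 0 -> v%:P * p = u%:P * q -> exists r, p = u%:P * r.
Proof.
move=> uv v0 E; apply: polyC_dvd_coefs => j.
by apply: (rel_prime_cancel (y := q`_j) uv v0); rewrite -!coefCM E.
Qed.

End RelPrime.

Section ModuloI.
Variables a b : A.
Hypotheses (a0 : a != 0) (b0 : b != 0).
Implicit Types (c u w : A) (f : {poly A}).

Lemma Iid_polyC_eq0 c : Iid a b c%:P -> c = 0.
Proof.
case=> h E; case: (eqVneq h 0) => [h0 | hn0].
  by apply/eqP; rewrite -polyC_eq0 E h0 mulr0.
have size_lin : size (a%:P * 'X - b%:P) = 2%N.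
  by rewrite -polyCN size_MXaddC polyC_eq0 (negPf a0) size_polyC a0.
have lin0 : a%:P * 'X - b%:P != 0 by rewrite -size_poly_eq0 size_lin.
have := size_polyC_leq1 c; rewrite E size_mul // size_lin.
by rewrite -size_poly_gt0 in hn0; case: (size h) hn0.
Qed.

Lemma expr_mul_modI_const f :
  exists n c h, (a ^+ n)%:P * f = c%:P + (a%:P * 'X - b%:P) * h.
Proof.
elim/poly_ind: f => [|f d [n [c [h E]]]].
  by exists 0%N, 0, 0; rewrite !mulr0 addr0.
exists n.+1, (b * c + a ^+ n.+1 * d), (c%:P + a%:P * 'X * h).
have -> : (a ^+ n.+1)%:P * (f * 'X + d%:P)
          = a%:P * 'X * ((a ^+ n)%:P * f) + (a ^+ n.+1 * d)%:P.
  by rewrite exprS; ring.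
by rewrite E exprS; ring.
Qed.

Lemma Iid_mulCK u w f :
  a = u * w -> rel_prime u b -> Iid a b (u%:P * f) -> Iid a b f.
Proof.
move=> Ea ub [h E].
have u0 : u%:P != 0 by rewrite polyC_eq0; apply: contraNneq a0 => u0; rewrite Ea u0 mul0r.
have Eb : b%:P * h = u%:P * (w%:P * 'X * h - f).
  by rewrite mulrBr E Ea polyCM; ring.
have [h' Eh] := rel_prime_polyC_cancel ub b0 Eb.
by exists h'; apply: (mulfI u0); rewrite E Eh; ring.
Qed.

Hypothesis ab : rel_prime a b.

Lemma Iid_mul_exprK n f : Iid a b ((a ^+ n)%:P * f) -> Iid a b f.
Proof.
elim: n f => [|n IH] f; first by rewrite expr0 mul1r.
rewrite exprSr polyCM -mulrA => /IH.
exact: (Iid_mulCK (esym (mulr1 a)) ab).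
Qed.

End ModuloI.

Section PowersOfS.
Variables a b s : A.
Implicit Types (c y z : A) (f : {poly A}).

Lemma poly_MXaddC_decomp f : exists (g : {poly A}) c, f = g * 'X + c%:P.
Proof. by elim/poly_ind: f => [|f c _]; [exists 0, 0; rewrite mul0r add0r | exists f, c]. Qed.

Lemma sIidS_mulC k f : sIid a b s k f -> sIid a b s k.+1 (s%:P * f).
Proof.
case=> g [h ->]; exists g, (s%:P * h).
by rewrite exprS polyCM; ring.
Qed.

Lemma sIidS_polyC k c :
  sIid a b s k.+1 c%:P <->
  exists y z, c = b * y + s ^+ k.+1 * z /\ sIid a b s k.+1 (a * y)%:P.
Proof.
split=> [[g [h E]] | [y [z [-> [g [h E]]]]]]; last first.
  exists ('X * g + z%:P), ('X * h - y%:P).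
  have -> : (b * y + s ^+ k.+1 * z)%:P
            = 'X * (a * y)%:P - (a%:P * 'X - b%:P) * y%:P + (s ^+ k.+1 * z)%:P.
    by rewrite !polyCD !polyCM; ring.
  by rewrite E polyCM; ring.
have [g1 [z Eg]] := poly_MXaddC_decomp g.
have [h1 [h0 Eh]] := poly_MXaddC_decomp h.
have Ec : c = b * - h0 + s ^+ k.+1 * z.
  by have := congr1 (horner^~ 0) E; rewrite Eg Eh !hornerE => ->; ring.
exists (- h0), z; split=> //; exists g1, h1.
have : ((a * - h0)%:P - (s ^+ k.+1)%:P * g1 - (a%:P * 'X - b%:P) * h1) * 'X = 0.
  apply: (addrI c%:P); rewrite addr0 {1}E Ec Eg Eh !polyCD !polyCM polyCN; ring.
by move/eqP; rewrite mulf_eq0 polyX_eq0 orbF subr_eq0 subr_eq => /eqP ->; ring.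
Qed.

Hypotheses (a0 : a != 0) (b0 : b != 0).
Variable t : A.
Hypotheses (ast : a = s * t) (sb : rel_prime s b).

Lemma sIid_mulCK k f : sIid a b s k.+1 (s%:P * f) -> sIid a b s k f.
Proof.
case=> g [h E].
have [h' Eh'] : Iid a b (f - (s ^+ k)%:P * g).
  apply: (Iid_mulCK a0 b0 ast sb); exists h.
  by rewrite mulrBr E exprS polyCM; ring.
by exists g, h'; rewrite -Eh'; ring.
Qed.

Lemma sIid_polyC_Wid i c : sIid a b s i c%:P <-> Wid b s t i c.
Proof.
elim: i c => [|k IH] c.
  by split=> // _; exists c%:P, 0; rewrite expr0 mul1r mulr0 addr0.
have aE y : (a * y)%:P = s%:P * (t * y)%:P by rewrite ast -polyCM mulrA.
rewrite sIidS_polyC; split=> [[y [z [Ec]]] | [y [z [Wy Ec]]]].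
  by rewrite aE => /sIid_mulCK /IH Wy; exists y, z.
by exists y, z; split=> //; rewrite aE; apply/sIidS_mulC/IH.
Qed.

End PowersOfS.

End PolyIdeals.

Theorem lemma3p3 (A : idomainType) (a b s t : A) :
  a != 0 -> b != 0 -> rel_prime a b -> rel_prime s t -> a = s * t ->
  ((forall f : {poly A}, bigsI a b s f <-> Iid a b f) <->
   (forall c : A, bigsI a b s c%:P -> c = 0))
  /\ (forall c : A, bigsI a b s c%:P <-> Wbst b s t c).
Proof.
move=> a0 b0 ab _ ast.
have t0 : t != 0 by apply: contraNneq a0 => t0; rewrite ast t0 mulr0.
have sb : rel_prime s b by apply: (rel_prime_factorl t0); rewrite -ast.
split; last by split=> H i; apply/(sIid_polyC_Wid a0 b0 ast sb); apply: H.
split=> [bigsI_I c /bigsI_I | bigsI0 f]; first exact: Iid_polyC_eq0.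
split=> [f_in | [h ->] i]; last by exists 0, h; rewrite mulr0 add0r.
have [n [c [h E]]] := expr_mul_modI_const a b f.
have c0 : c = 0.
  apply: bigsI0 => i; have [g [k Ek]] := f_in i.
  exists ((a ^+ n)%:P * g), ((a ^+ n)%:P * k - h).
  have -> : c%:P = (a ^+ n)%:P * f - (a%:P * 'X - b%:P) * h by rewrite E; ring.
  by rewrite Ek; ring.
by apply: (Iid_mul_exprK a0 b0 ab (n := n)); exists h; rewrite E c0 add0r.
Qed.
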